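(* Let $F=(T_1,\dots,T_b)$ be a tree ensemble with input dimension $n$ and output dimension $m$ in which every leaf region is a box, and write $T_r=\{(X_{r,1},\bar y_{r,1}),\dots,(X_{r,k_r},\bar y_{r,k_r})\}$. Let $\hat X$ be a box none of whose components is $\bot$. For every choice of indices $(j_1,\dots,j_b)$ with $1\le j_r\le k_r$, put $$\hat Y_{j_1,\dots,j_b}=\hat X\sqcap\alpha_n(X_{1,j_1})\sqcap\dots\sqcap\alpha_n(X_{b,j_b}).$$ Then (i) whenever no component of $\hat Y_{j_1,\dots,j_b}$ is $\bot$, the set $\gamma_m\big(\hat f(\hat Y_{j_1,\dots,j_b};F)\big)$ has exactly one element; and (ii) the sets $\gamma_n(\hat Y_{j_1,\dots,j_b})$, over those index choices for which no component of $\hat Y_{j_1,\dots,j_b}$ is $\bot$, are pairwise disjoint and their union is $\gamma_n(\hat X)$.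
   Context: Setting (interval abstract interpretation). $\mathcal{D}\subset\mathbb{R}$ is a fixed finite nonempty set, ordered by $\le$. Input intervals: $\bot$ and $[l,u]$ with $l,u\in\mathcal D$, $l\le u$; $\gamma([l,u])=\{v\in\mathcal D:l\le v\le u\}$, $\gamma(\bot)=\emptyset$; $\alpha(V)=[\min V,\max V]$ for nonempty $V\subseteq\mathcal D$, $\alpha(\emptyset)=\bot$; meet $[l,u]\sqcap[l',u']=\bot$ if $\max(l,l')>\min(u,u')$, else $[\max(l,l'),\min(u,u')]$; $\bot\sqcap\hat v=\bot$. Output (real) intervals: $\bot$ and $[l,u]$, $l\le u$ real; $\gamma([l,u])=\{v\in\mathbb R:l\le v\le u\}$; $\alpha(V)=[\min V,\max V]$ for finite nonempty $V\subset\mathbb R$, $\alpha(\emptyset)=\bot$; $[a,b]+[c,d]=[a+c,b+d]$, $\bot+\hat v=\bot$. For sets of tuples $\alpha_n(X)=(\alpha(\pi_1X),\dots,\alpha(\pi_nX))$; a box is a tuple $(\hat x_1,\dots,\hat x_n)$ of input intervals, with $\gamma_n(\hat x_1,\dots,\hat x_n)=\prod_i\gamma(\hat x_i)$; meet of boxes componentwise; ''$\hat X\sqcap\hat Y\ne\bot$'' means no component is $\bot$. $\alpha_m,\gamma_m$ on $\mathbb R^m$ are componentwise likewise. Decision tree $T=\{(X_1,\bar y_1),\dots,(X_k,\bar y_k)\}$: $X_1,\dots,X_k$ partition $\mathcal D^n$, $\bar y_j\in\mathbb R^m$; $t(\bar x;T)=\bar y_j$ iff $\bar x\in X_j$; tree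 transformer $\hat t(\hat X;T)=\alpha_m(\{\bar y_j:\hat X\sqcap\alpha_n(X_j)\ne\bot\})$. A leaf region $X_j$ is a box if $X_j=\gamma_n(\alpha_n(X_j))$ (i.e. it is a product of sets of the form $\{v\in\mathcal D:l\le v\le u\}$); this holds for trees with univariate threshold rules. Ensemble $F=(T_1,\dots,T_b)$: $f(\bar x;F)=\sum_i t(\bar x;T_i)$, ensemble transformer $\hat f(\hat X;F)=\sum_i\hat t(\hat X;T_i)$. *)

From HB Require Import structures.
From mathcomp Require Import all_boot all_order all_algebra.
From mathcomp Require Import reals.
Set Implicit Arguments. Unset Strict Implicit. Unset Printing Implicit Defensive.
Import Order.TTheory GRing.Theory Num.Theory.
Local Open Scope ring_scope.

Section IntervalAI.
Variable R : realType.
(* the finite nonempty domain D, given as a list of its elements *)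
Variable D : seq R.

Definition dom := seq_sub D.

(* interval values (input and output): None = bot, Some (l, u) = [l, u] *)
Definition itv := option (R * R).

Definition itv_wf (a : itv) : bool :=
  match a with None => true | Some (l, u) => [&& l \in D, u \in D & l <= u] end.

Definition gamma_in (a : itv) (v : dom) : bool :=
  match a with None => false | Some (l, u) => (l <= val v) && (val v <= u) end.

Definition alpha_in (V : {set dom}) : itv :=
  match [pick v in V] with
  | None => None
  | Some v0 => Some (\big[Num.min/val v0]_(v in V) val v,
                     \big[Num.max/val v0]_(v in V) val v)
  end.

Definition meet_in (a b : itv) : itv :=
  match a, b with
  | Some (l, u), Some (l', u') =>
      if Num.max l l' > Num.min u u' then None
      else Some (Num.max l l', Num.min u u')
  | _, _ => None
  end.

Definition gamma_out (a : itv) (v : R) : bool :=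
  match a with None => false | Some (l, u) => (l <= v) && (v <= u) end.

(* abstraction of a finite set of reals, given by a list of its elements *)
Definition alpha_out (s : seq R) : itv :=
  match s with
  | [::] => None
  | v0 :: _ => Some (\big[Num.min/v0]_(v <- s) v, \big[Num.max/v0]_(v <- s) v)
  end.

Definition add_out (a b : itv) : itv :=
  match a, b with
  | Some (a1, b1), Some (c1, d1) => Some (a1 + c1, b1 + d1)
  | _, _ => None
  end.

Variables n m : nat.

Definition pt := {ffun 'I_n -> dom}.

Definition box := 'I_n -> itv.

Definition gamma_n (B : box) : {set pt} :=
  [set x : pt | [forall i, gamma_in (B i) (x i)]].

Definition alpha_n (X : {set pt}) : box :=
  fun i => alpha_in [set (x : pt) i | x in X].

Definition meet_n (B B' : box) : box := fun i => meet_in (B i) (B' i).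

Definition nonbot_n (B : box) : bool := [forall i, B i != None].

Definition obox := 'I_m -> itv.
Definition gamma_m (B : obox) (y : {ffun 'I_m -> R}) : bool :=
  [forall i, gamma_out (B i) (y i)].

(* a decision tree {(X_1,y_1),...,(X_k,y_k)} *)
Record dtree := DTree {
  nleaves : nat;
  region : 'I_nleaves -> {set pt};
  leafval : 'I_nleaves -> {ffun 'I_m -> R} }.
Arguments region d j : clear implicits.
Arguments leafval d j : clear implicits.

Definition is_tree (T : dtree) : Prop :=
  forall x : pt, exists! j, x \in region T j.

(* every leaf region is a box *)
Definition leaves_are_boxes (T : dtree) : Prop :=
  forall j, region T j = gamma_n (alpha_n (region T j)).

Definition tree_tf (T : dtree) (B : box) : obox :=
  fun i => alpha_out [seq leafval T j i | j <- enum 'I_(nleaves T)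
                        & nonbot_n (meet_n B (alpha_n (region T j)))].

Definition ens_tf (b : nat) (F : 'I_b -> dtree) (B : box) : obox :=
  fun i => \big[add_out/Some (0, 0)]_(r < b) tree_tf (F r) B i.

Definition Yhat (b : nat) (F : 'I_b -> dtree) (Xh : box)
    (J : {dffun forall r : 'I_b, 'I_(nleaves (F r))}) : box :=
  foldl (fun acc r => meet_n acc (alpha_n (region (F r) (J r)))) Xh (enum 'I_b).

End IntervalAI.
Arguments region {R D n m} d j.
Arguments leafval {R D n m} d j.
Arguments Yhat {R D n m b} F Xh J.
Arguments ens_tf {R D n m b} F B i.
Arguments tree_tf {R D n m} T B i.

From HB Require Import structures.
From mathcomp Require Import all_boot all_order all_algebra.
From mathcomp Require Import reals.
Import Order.TTheory GRing.Theory Num.Theory.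
Local Open Scope ring_scope.

(* The proof rests on two facts about boxes.  First, γ commutes with meets
   (γ(A ⊓ B) = γ A ∩ γ B), so, since every leaf region is a box,
   γ(Y_J) = γ(Xh) ∩ X_{1,j_1} ∩ ... ∩ X_{b,j_b}.  Second, a box whose lower
   bounds lie in D (an invariant preserved by meets and abstractions) is
   non-⊥ exactly when its concretization is nonempty.
   Partition (ii) follows from the first fact, since each tree partitions D^n.
   For (i), pick x ∈ γ(Y_J): tree r can only meet Y_J in the leaf j_r
   containing x, so each tree transformer returns the point interval
   [y_{r,j_r}, y_{r,j_r}] and the ensemble returns a point interval as well. *)

Set Implicit Arguments. Unset Strict Implicit.

Section BoxMeet.
Variable R : realType.
Variable D : seq R.
Variable n : nat.

Lemma gamma_meet_in (a b : itv R) (v : dom D) :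
  gamma_in (meet_in a b) v = gamma_in a v && gamma_in b v.
Proof.
case: a => [[l u]|]; case: b => [[l' u']|] //=; last by rewrite andbF.
case: ltP => [empty|_] /=; last by rewrite ge_max le_min; do ![case: (_ <= _)].
apply/esym/negP => /andP[/andP[lv vu] /andP[l'v vu']].
have : Num.max l l' <= Num.min u u'.
  by apply: (@le_trans _ _ (val v)); [rewrite ge_max lv l'v | rewrite le_min vu vu'].
by rewrite leNgt empty.
Qed.

Lemma gamma_meet_n (B B' : box R n) :
  gamma_n D (meet_n B B') = gamma_n D B :&: gamma_n D B'.
Proof.
apply/setP => x; rewrite !inE.
apply/forallP/andP => [H|[/forallP H1 /forallP H2] i]; last first.
  by rewrite /meet_n gamma_meet_in H1 H2.
by split; apply/forallP => i; move: (H i); rewrite /meet_n gamma_meet_in => /andP[].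
Qed.

Lemma mem_gamma_foldl_meet (I : Type) (G : I -> box R n) (x : pt D n) :
  forall (s : seq I) (acc : box R n),
  x \in gamma_n D (foldl (fun acc r => meet_n acc (G r)) acc s)
  = (x \in gamma_n D acc) && all (fun r => x \in gamma_n D (G r)) s.
Proof.
elim=> [|r s IH] acc /=; first by rewrite andbT.
by rewrite IH gamma_meet_n in_setI andbA.
Qed.

(* Invariant: a non-⊥ interval has its lower bound in D (and below the upper
   one); it guarantees that non-⊥ intervals have nonempty concretization. *)
Definition lower_in_dom (a : itv R) : bool :=
  if a is Some (l, u) then (l \in D) && (l <= u) else true.

Lemma lower_in_dom_meet (a b : itv R) :
  lower_in_dom a -> lower_in_dom b -> lower_in_dom (meet_in a b).
Proof.
case: a => [[l u]|] //; case: b => [[l' u']|] //= /andP[lD _] /andP[l'D _].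
by case: ltP => //= ->; rewrite andbT /Order.max; case: ifP.
Qed.

Lemma lower_in_dom_alpha (V : {set dom D}) : lower_in_dom (alpha_in V).
Proof.
rewrite /alpha_in; case: pickP => [v0 _|] //=; apply/andP; split.
  apply: (big_rec (fun x => x \in D)); first exact: (valP v0).
  by move=> i x _ Hx; rewrite /Order.min; case: ifP => // _; exact: (valP i).
apply: (@le_trans _ _ (val v0)).
  by apply: (big_rec (fun x => x <= val v0)) => // i x _ Hx; rewrite ge_min Hx orbT.
by apply: (big_rec (fun x => val v0 <= x)) => // i x _ Hx; rewrite le_max Hx orbT.
Qed.

Lemma lower_in_dom_foldl_meet (I : Type) (G : I -> box R n) :
  (forall r i, lower_in_dom (G r i)) ->
  forall (s : seq I) (acc : box R n), (forall i, lower_in_dom (acc i)) ->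
  forall i, lower_in_dom (foldl (fun acc r => meet_n acc (G r)) acc s i).
Proof.
move=> HG; elim=> [|r s IH] acc Hacc i //=.
by apply: IH => j; apply: lower_in_dom_meet.
Qed.

Lemma gamma_n_nonempty (B : box R n) :
  (forall i, lower_in_dom (B i)) -> nonbot_n B -> exists x : pt D n, x \in gamma_n D B.
Proof.
move=> Hlow /forallP Hnb.
have : forall i, exists v : dom D, gamma_in (B i) v.
  move=> i; move: (Hlow i) (Hnb i).
  case: (B i) => [[l u] /andP[lD lu] _|]; last by rewrite eqxx.
  by exists (SeqSub lD); rewrite /= lexx lu.
case/fin_all_exists => f Hf.
by exists [ffun i => f i]; rewrite inE; apply/forallP => i; rewrite ffunE.
Qed.

Lemma nonbot_of_mem (B : box R n) (x : pt D n) : x \in gamma_n D B -> nonbot_n B.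
Proof. by rewrite inE => /forallP H; apply/forallP => i; move: (H i); case: (B i). Qed.

End BoxMeet.

Lemma gamma_m_point (R : realType) (m : nat) (B : obox R m) (y0 : {ffun 'I_m -> R}) :
  (forall i, B i = Some (y0 i, y0 i)) -> exists! y, gamma_m B y.
Proof.
move=> HB; exists y0; split; first by apply/forallP => i; rewrite HB /= lexx.
move=> y /forallP Hy; apply/ffunP => i; move: (Hy i); rewrite HB /=.
by move=> /andP[lo hi]; apply/le_anti; rewrite lo hi.
Qed.

Section Ensemble.
Variable R : realType.
Variable D : seq R.
Variables n m b : nat.
Variable F : 'I_b -> dtree D n m.
Hypothesis F_trees : forall r, is_tree (F r).
Hypothesis F_boxes : forall r, leaves_are_boxes (F r).
Variable Xh : box R n.

Local Notation leaf_choice := {dffun forall r : 'I_b, 'I_(nleaves (F r))}.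

Lemma leaf_unique r j j' (x : pt D n) :
  x \in region (F r) j -> x \in region (F r) j' -> j = j'.
Proof. by case: (F_trees r x) => j0 [_ Hu] Hj Hj'; rewrite -(Hu j) // -(Hu j'). Qed.

Lemma mem_gamma_Yhat (J : leaf_choice) (x : pt D n) :
  x \in gamma_n D (Yhat F Xh J) =
  (x \in gamma_n D Xh) && [forall r, x \in region (F r) (J r)].
Proof.
rewrite /Yhat mem_gamma_foldl_meet; congr (_ && _).
apply/allP/forallP => [H r|H r _]; last by rewrite -F_boxes.
by rewrite F_boxes H ?mem_enum.
Qed.

Hypothesis Xh_low : forall i, lower_in_dom D (Xh i).

Lemma lower_in_dom_Yhat (J : leaf_choice) i : lower_in_dom D (Yhat F Xh J i).
Proof.
apply: lower_in_dom_foldl_meet => // r k; exact: lower_in_dom_alpha.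
Qed.

Lemma nonbot_Yhat_leaf (J : leaf_choice) r j :
  nonbot_n (Yhat F Xh J) ->
  nonbot_n (meet_n (Yhat F Xh J) (alpha_n (region (F r) j))) = (j == J r).
Proof.
move=> /(gamma_n_nonempty (lower_in_dom_Yhat J)) [x0 Hx0].
apply/idP/eqP => [Hnb|->].
  have low i : lower_in_dom D (meet_n (Yhat F Xh J) (alpha_n (region (F r) j)) i).
    exact: lower_in_dom_meet (lower_in_dom_Yhat J i) (lower_in_dom_alpha _).
  have [x] := gamma_n_nonempty low Hnb.
  rewrite gamma_meet_n in_setI -F_boxes mem_gamma_Yhat => /andP[/andP[_ /forallP Hr] Hj].
  exact: leaf_unique Hj (Hr r).
apply: (nonbot_of_mem (x := x0)); rewrite gamma_meet_n in_setI -F_boxes Hx0.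
by move: Hx0; rewrite mem_gamma_Yhat => /andP[_ /forallP]; apply.
Qed.

Lemma tree_tf_Yhat (J : leaf_choice) r i :
  nonbot_n (Yhat F Xh J) ->
  tree_tf (F r) (Yhat F Xh J) i = Some (leafval (F r) (J r) i, leafval (F r) (J r) i).
Proof.
move=> HJ; rewrite /tree_tf (@eq_filter _ _ (pred1 (J r))); last first.
  by move=> j; exact: nonbot_Yhat_leaf.
rewrite filter_pred1_uniq ?enum_uniq ?mem_enum //=.
by rewrite !big_cons !big_nil minxx maxxx.
Qed.

Lemma ens_tf_Yhat (J : leaf_choice) i :
  nonbot_n (Yhat F Xh J) ->
  ens_tf F (Yhat F Xh J) i =
    Some (\sum_(r < b) leafval (F r) (J r) i, \sum_(r < b) leafval (F r) (J r) i).
Proof.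
move=> HJ; rewrite /ens_tf; under eq_bigr do rewrite tree_tf_Yhat //.
by apply: (big_rec2 (fun a c => a = Some (c, c))) => // r y1 y2 _ ->.
Qed.

Lemma Yhat_disjoint (J J' : leaf_choice) :
  J != J' -> [disjoint gamma_n D (Yhat F Xh J) & gamma_n D (Yhat F Xh J')].
Proof.
move=> /eqP neqJ; rewrite disjoint_subset; apply/subsetP => x inJ; apply/negP => inJ'.
move: inJ inJ'; rewrite !mem_gamma_Yhat => /andP[_ /forallP H1] /andP[_ /forallP H2].
by apply: neqJ; apply/ffunP => r; exact: leaf_unique (H1 r) (H2 r).
Qed.

(* The non-⊥ pieces cover Xh: each point picks its leaf in every tree. *)
Lemma Yhat_cover :
  gamma_n D Xh =
  \bigcup_(J | nonbot_n (Yhat F Xh J)) gamma_n D (Yhat F Xh J).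
Proof.
apply/setP => x; apply/idP/bigcupP => [Hx|[J _]]; last by rewrite mem_gamma_Yhat => /andP[].
have : forall r, exists j, x \in region (F r) j.
  by move=> r; case: (F_trees r x) => j [Hj _]; exists j.
case/fin_all_exists => f Hf.
pose J := (finfun f : leaf_choice).
have HxJ : x \in gamma_n D (Yhat F Xh J).
  by rewrite mem_gamma_Yhat Hx; apply/forallP => r; rewrite ffunE.
by exists J => //; exact: nonbot_of_mem HxJ.
Qed.

End Ensemble.

Theorem mainTheorem6 (R : realType) (D : seq R) (n m b : nat)
    (F : 'I_b -> dtree D n m) (Xh : box R n) :
  D != [::] ->
  (forall r, is_tree (F r)) ->
  (forall r, leaves_are_boxes (F r)) ->
  (forall i, itv_wf D (Xh i)) ->
  nonbot_n Xh ->
  (forall J, nonbot_n (Yhat F Xh J) ->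
     exists! y : {ffun 'I_m -> R}, gamma_m (ens_tf F (Yhat F Xh J)) y) /\
  ((forall J J', J != J' -> nonbot_n (Yhat F Xh J) -> nonbot_n (Yhat F Xh J') ->
      [disjoint gamma_n D (Yhat F Xh J) & gamma_n D (Yhat F Xh J')]) /\
   gamma_n D Xh = \bigcup_(J | nonbot_n (Yhat F Xh J)) gamma_n D (Yhat F Xh J)).
Proof.
move=> _ trees boxes Xh_wf _.
have Xh_low i : lower_in_dom D (Xh i).
  by move: (Xh_wf i); case: (Xh i) => [[l u] /= /and3P[-> _ ->]|].
split; last by split; [move=> J J' neqJ _ _; exact: Yhat_disjoint | exact: Yhat_cover].
move=> J HJ; apply: (gamma_m_point (y0 := [ffun i => \sum_(r < b) leafval (F r) (J r) i])).
by move=> i; rewrite ffunE; exact: ens_tf_Yhat.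
Qed.
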